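(* Let $\mathfrak g$ be a nilpotent Lie algebra of nilindex $3$ (i.e. $\mathfrak g^3=0$) over a field of characteristic zero, let $\mathcal F_\bullet\mathfrak g$ be its standard filtration $\mathcal F_n\mathfrak g=\mathfrak g^n$, and let $R:\mathfrak g\to\mathfrak g$ be a Rota–Baxter operator of weight 1 preserving the filtration. Then the Rota–Baxter operator $\mathfrak R(x)=\log(\widehat{\mathcal R}(\exp(x)))$ on the group $(\mathfrak g,* )$ is given by $$\mathfrak R(x)=R(x)-\tfrac12 R([R(x),x]),\qquad x\in\mathfrak g.$$
   Context: $\mathfrak g^1=\mathfrak g$, $\mathfrak g^n=[\mathfrak g,\mathfrak g^{n-1}]$. Rota–Baxter operator of weight 1: linear $R$ with $[R(x),R(y)]=R([R(x),y]+[x,R(y)]+[x,y])$. Since $\mathfrak g$ is nilpotent, $\mathfrak g$ with the standard filtration is complete, so $\widehat{\mathfrak g}=\mathfrak g$. Filtration of $U(\mathfrak g)$: $\mathcal F_0U=U(\mathfrak g)$, $\mathcal F_nU$ spanned by $x_1\cdots x_k$ with $x_i\in\mathcal F_{n_i}\mathfrak g$, $\sum n_i\ge n$; $\widehat U(\mathfrak g)=\varprojlim U(\mathfrak g)/\mathcal F_nU(\mathfrak g)$ is a complete Hopf algebra containing $\mathfrak g$. $\mathcal R:U(\mathfrak g)\to U(\mathfrak g)$ is the linear map with $\mathcal R(1)=1$, $\mathcal R(x)=R(x)$, $\mathcal R(xh)=R(x)\mathcal R(h)-\mathcal R([R(x),h])$; it preserves the filtration and induces $\widehat{\mathcal R}$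 on $\widehat U(\mathfrak g)$. $\exp(x)=\sum_n x^n/n!$ is a bijection from $\mathfrak g$ onto the group $\mathbb G$ of nonzero group-like elements of $\widehat U(\mathfrak g)$, with inverse $\log$; $\widehat{\mathcal R}(\mathbb G)\subset\mathbb G$. The group $(\mathfrak g,* )$ is given by $x*y=\log(\exp(x)\exp(y))$, which here equals $x+y+\frac12[x,y]$. *)

From HB Require Import structures.
From mathcomp Require Import all_boot all_order all_algebra.
Set Implicit Arguments. Unset Strict Implicit. Unset Printing Implicit Defensive.
Import Order.TTheory GRing.Theory Num.Theory.
Local Open Scope ring_scope.

Definition is_lie_bracket (K : fieldType) (g : lmodType K) (br : g -> g -> g) : Prop :=
  [/\ (forall (a : K) x y z, br (a *: x + y) z = a *: br x z + br y z),
      (forall (a : K) x y z, br z (a *: x + y) = a *: br z x + br z y),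
      (forall x, br x x = 0) &
      (forall x y z, br x (br y z) + br y (br z x) + br z (br x y) = 0)].

(* Since the bracket is
   bilinear, the span of the brackets is the set of finite sums of brackets. *)
Fixpoint lcs (K : fieldType) (g : lmodType K) (br : g -> g -> g) (n : nat) (x : g) : Prop :=
  match n with
  | 0 | 1 => True
  | m.+1 => exists s : seq (g * g),
      (forall p, p \in s -> lcs br m p.2) /\ x = \sum_(p <- s) br p.1 p.2
  end.

Definition rota_baxter1 (K : fieldType) (g : lmodType K) (br : g -> g -> g) (R : g -> g) : Prop :=
  (forall (a : K) x y, R (a *: x + y) = a *: R x + R y) /\
  (forall x y, br (R x) (R y) = R (br (R x) y + br x (R y) + br x y)).

Definition lie_map (K : fieldType) (g : lmodType K) (br : g -> g -> g)
  (A : algType K) (f : g -> A) : Prop :=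
  (forall (a : K) x y, f (a *: x + y) = a *: f x + f y) /\
  (forall x y, f (br x y) = f x * f y - f y * f x).

Definition alg_morph (K : fieldType) (A B : algType K) (phi : A -> B) : Prop :=
  [/\ (forall (a : K) u v, phi (a *: u + v) = a *: phi u + phi v),
      (forall u v, phi (u * v) = phi u * phi v) & phi 1 = 1].

Definition is_envelope (K : fieldType) (g : lmodType K) (br : g -> g -> g)
  (U : algType K) (iota : g -> U) : Prop :=
  lie_map br iota /\
  forall (A : algType K) (f : g -> A), lie_map br f ->
    (exists phi : U -> A, alg_morph phi /\ forall x, phi (iota x) = f x) /\
    (forall phi1 phi2 : U -> A, alg_morph phi1 -> alg_morph phi2 ->
       (forall x, phi1 (iota x) = f x) -> (forall x, phi2 (iota x) = f x) ->
       forall u, phi1 u = phi2 u).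

(* Filtration of U(g): F_n U is spanned by products iota x_1 ... iota x_k with
   x_i in F_{n_i} g and n_1 + ... + n_k >= n. *)
Definition filtU (K : fieldType) (g : lmodType K) (br : g -> g -> g)
  (U : algType K) (iota : g -> U) (n : nat) (u : U) : Prop :=
  exists s : seq (K * seq (nat * g)),
    (forall w, w \in s ->
       (forall p, p \in w.2 -> lcs br p.1 p.2) /\ (n <= \sum_(p <- w.2) p.1)%N) /\
    u = \sum_(w <- s) w.1 *: \prod_(p <- w.2) iota p.2.

Definition RB_ext (K : fieldType) (g : lmodType K) (U : algType K) (iota : g -> U)
  (R : g -> g) (RR : U -> U) : Prop :=
  [/\ (forall (a : K) u v, RR (a *: u + v) = a *: RR u + RR v),
      RR 1 = 1,
      (forall x, RR (iota x) = iota (R x)) &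
      (forall x h, RR (iota x * h) =
         iota (R x) * RR h - RR (iota (R x) * h - h * iota (R x)))].

Definition exp_trunc (K : fieldType) (U : algType K) (n : nat) (u : U) : U :=
  \sum_(k < n) (k`!%:R : K)^-1 *: u ^+ k.

From HB Require Import structures.
From mathcomp Require Import all_boot all_order all_algebra.
From mathcomp Require Import zify.
Set Implicit Arguments. Unset Strict Implicit. Unset Printing Implicit Defensive.
Import Order.TTheory GRing.Theory Num.Theory.
Local Open Scope ring_scope.

(* In U(g) put a = x, b = R(x), d = R([R(x), x]) and e = -d/2.  Since g^3 = 0,
   [b, a] = [R(x), x] and d are central, so the recursion defining RR gives
   RR(a^(m+2)) = b RR(a^(m+1)) - (m+1) d RR(a^m).  As b and e commute, this is
   solved by RR(a^k)/k! = sum_{i+2j=k} b^i e^j/(i! j!): RR(exp a) is exp(b) exp(e)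
   graded with e in degree 2, whereas exp(y) = exp(b + e) is the same product
   graded with e in degree 1.  Below degree n the two truncations differ only by
   the terms b^i e^j with i + j < n <= i + 2j, which lie in F_n U as e lies in g^2. *)

Lemma sum_ord_shift (V : nmodType) N (G : nat -> V) : G 0%N = 0 -> G N = 0 ->
  \sum_(i < N) G i.+1 = \sum_(i < N) G i.
Proof.
move=> G0 GN; transitivity (\sum_(i < N.+1) G i).
  by rewrite big_ord_recl G0 add0r.
by rewrite big_ord_recr /= GN addr0.
Qed.

Lemma commutator_exprS (A : pzRingType) (a b c : A) :
  b * a - a * b = c -> GRing.comm c a ->
  forall m, b * a ^+ m.+1 - a ^+ m.+1 * b = (c * a ^+ m) *+ m.+1.
Proof.
move=> ba ca; elim=> [|m IH]; first by rewrite expr1 expr0 mulr1.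
have -> : b * a ^+ m.+2 - a ^+ m.+2 * b =
          (b * a ^+ m.+1 - a ^+ m.+1 * b) * a + a ^+ m.+1 * (b * a - a * b).
  by rewrite !exprSr mulrBl mulrBr !mulrA addrA subrK.
rewrite IH ba mulrnAl -mulrA -exprSr -(commrX m.+1 ca).
by rewrite [RHS]mulrSr.
Qed.

Section WeightedExponential.
Variables (K : fieldType) (U : algType K) (b e : U).
Hypotheses (charK0 : [pchar K] =i pred0) (comm_be : GRing.comm b e).

Lemma natf_neq0_char0 n : (0 < n)%N -> (n%:R : K) != 0.
Proof. by rewrite ((pcharf0P K).1 charK0) -lt0n. Qed.

Definition dmon i j : U := ((i`! * j`!)%:R : K)^-1 *: (b ^+ i * e ^+ j).

Lemma mul_dmonl i j : b * dmon i j = dmon i.+1 j *+ i.+1.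
Proof.
rewrite /dmon -scalerAr mulrA -exprS -scaler_nat scalerA; congr (_ *: _).
by rewrite factS -mulnA (natrM _ i.+1) invfM mulrA mulfV ?mul1r ?natf_neq0_char0.
Qed.

Lemma mul_dmonr i j : e * dmon i j = dmon i j.+1 *+ j.+1.
Proof.
rewrite /dmon -scalerAr mulrA (commrX i (commr_sym comm_be)) -mulrA -exprS.
rewrite -scaler_nat scalerA; congr (_ *: _).
by rewrite factS mulnCA (natrM _ j.+1) invfM mulrA mulfV ?mul1r ?natf_neq0_char0.
Qed.

(* The part of degree k of exp(b) exp(e) when e has degree w.  Capping i and j
   below N loses nothing as long as k < N, and lets all parts share one range. *)
Definition wpart w N k : U :=
  \sum_(i < N) \sum_(j < N) (if (i + w * j == k)%N then dmon i j else 0).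

Lemma mul_wpartl w N k : (k.+1 < N)%N -> b * wpart w N k =
  \sum_(i < N) \sum_(j < N) (if (i + w * j == k.+1)%N then dmon i j *+ i else 0).
Proof.
move=> kN; rewrite /wpart mulr_sumr -(@sum_ord_shift _ N
  (fun i => \sum_(j < N) (if (i + w * j == k.+1)%N then dmon i j *+ i else 0))).
- apply: eq_bigr => i _; rewrite mulr_sumr; apply: eq_bigr => j _.
  by rewrite addSn eqSS; case: ifP; rewrite ?mul_dmonl ?mulr0.
- by apply: big1 => j _; rewrite mulr0n if_same.
- by apply: big1 => j _; rewrite ifF //; apply/negbTE/eqP; lia.
Qed.

Lemma mul_wpartr w N k : (0 < w)%N -> (k + w < N)%N -> e * wpart w N k =
  \sum_(i < N) \sum_(j < N) (if (i + w * j == k + w)%N then dmon i j *+ j else 0).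
Proof.
move=> w_gt0 kN; rewrite /wpart mulr_sumr; apply: eq_bigr => i _; rewrite mulr_sumr.
rewrite -(@sum_ord_shift _ N
  (fun j => if (i + w * j == k + w)%N then dmon i j *+ j else 0)).
- apply: eq_bigr => j _; rewrite mulnS (addnC w) addnA eqn_add2r.
  by case: ifP; rewrite ?mul_dmonr ?mulr0.
- by rewrite mulr0n if_same.
- by rewrite ifF //; apply/negbTE/eqP; nia.
Qed.

(* Euler's identity for the weighted degree: b raises it by 1 and e by w. *)
Lemma wpart_euler v N k : ((k + v).+1 < N)%N ->
  b * wpart v.+1 N (k + v)%N + (e * wpart v.+1 N k) *+ v.+1 =
  wpart v.+1 N (k + v).+1%N *+ (k + v).+1%N.
Proof.
move=> kN; rewrite mul_wpartl // mul_wpartr ?addnS // -sumrMnl -big_split /=.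
rewrite /wpart -sumrMnl; apply: eq_bigr => i _.
rewrite -sumrMnl -big_split -sumrMnl /=; apply: eq_bigr => j _.
case: ifP => [/eqP ij | _]; last by rewrite mul0rn addr0 mul0rn.
by rewrite -mulrnA -mulrnDr; congr (_ *+ _); nia.
Qed.

Lemma wpart0 w N : (0 < w)%N -> (0 < N)%N -> wpart w N 0 = 1.
Proof.
move=> w_gt0; rewrite /wpart; case: N => // N _.
rewrite big_ord_recl [X in _ + X]big1 ?addr0; last by move=> i _; apply: big1.
rewrite big_ord_recl [X in _ + X]big1 ?addr0; last first.
  by move=> j _; rewrite ifF //; apply/negbTE/eqP; rewrite lift0 /=; nia.
by rewrite /= muln0 /dmon expr0 mulr1 invr1 scale1r.
Qed.

Lemma wpart1 w N : (1 < w)%N -> (1 < N)%N -> wpart w N 1 = b.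
Proof.
move=> w_gt1 N_gt1; rewrite -[RHS]mulr1 -(@wpart0 w N) ?(ltnW w_gt1) ?(ltnW N_gt1) //.
rewrite mul_wpartl //; apply: eq_bigr => i _; apply: eq_bigr => j _.
case: ifP => // /eqP ij; have -> : (i : nat) = 1%N.
  by move: ij; case: (nat_of_ord j) => [|j']; [rewrite muln0 addn0 | nia].
by rewrite mulr1n.
Qed.

Lemma exprD_wpart N k : (k < N)%N -> (b + e) ^+ k = wpart 1 N k *+ k`!.
Proof.
elim: k => [|k IH] kN; first by rewrite expr0 wpart0 // mulr1n.
rewrite exprS IH ?(ltnW kN) // mulrnAr mulrDl.
have := @wpart_euler 0 N k; rewrite !addn0 mulr1n => -> //.
by rewrite factS mulrnA.
Qed.

Lemma wpart2_recursion N (r : nat -> U) : r 0%N = 1 -> r 1%N = b ->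
  (forall m, r m.+2 = b * r m.+1 + (e * r m) *+ 2 *+ m.+1) ->
  forall k, (k < N)%N -> r k = wpart 2 N k *+ k`!.
Proof.
move=> r0 r1 rSS.
suff rk : forall k, ((k < N)%N -> r k = wpart 2 N k *+ k`!) /\
                    ((k.+1 < N)%N -> r k.+1 = wpart 2 N k.+1 *+ k.+1`!).
  by move=> k; case: (rk k).
elim=> [|k [IHk IHk1]].
  by split=> N_gt; rewrite ?wpart0 ?wpart1 ?r0 ?r1 ?mulr1n //; lia.
split=> // kN; rewrite rSS IHk1 ?(ltnW kN) // IHk ?(ltnW (ltnW kN)) //.
have := @wpart_euler 1 N k; rewrite !addn1 => /(_ kN) euler.
rewrite (factS k.+1) (mulrnA (wpart 2 N k.+2)) -euler !mulrnAr [RHS]mulrnDl; congr (_ + _).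
by rewrite -!mulrnA factS; congr (_ *+ _); nia.
Qed.

Lemma sum_wpart w N : \sum_(k < N) wpart w N k =
  \sum_(i < N) \sum_(j < N) (if (i + w * j < N)%N then dmon i j else 0).
Proof.
rewrite /wpart exchange_big /=; apply: eq_bigr => i _.
rewrite exchange_big /=; apply: eq_bigr => j _.
rewrite -big_mkcond (eq_bigl (fun k : 'I_N => k == i + w * j :> nat)%N).
  exact: (big_ord1_eq _ (fun=> dmon i j)).
by move=> k; rewrite eq_sym.
Qed.

Lemma exp_trunc_sub_sum_wpart2 N :
  exp_trunc N (b + e) - \sum_(k < N) wpart 2 N k =
  \sum_(i < N) \sum_(j < N)
    (if (i + j < N)%N && (N <= i + 2 * j)%N then dmon i j else 0).
Proof.
have -> : exp_trunc N (b + e) = \sum_(k < N) wpart 1 N k.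
  apply: eq_bigr => k _; rewrite (exprD_wpart (ltn_ord k)) -scaler_nat scalerA.
  by rewrite mulVf ?scale1r ?natf_neq0_char0 ?fact_gt0.
rewrite !sum_wpart -sumrB; apply: eq_bigr => i _; rewrite -sumrB.
apply: eq_bigr => j _; rewrite mul1n.
have [ij|ij] := ltnP (i + j) N; have [i2j|i2j] := ltnP (i + 2 * j) N;
  rewrite /= ?subrr ?subr0 //; lia.
Qed.

End WeightedExponential.

Section NilpotentLieAlgebra.
Variables (K : fieldType) (g : lmodType K) (br : g -> g -> g).
Hypotheses (lie : is_lie_bracket br) (nil3 : forall x y z : g, br x (br y z) = 0).

Lemma lie_brDr x y z : br z (x + y) = br z x + br z y.
Proof. by case: lie => _ linr _ _; have := linr 1 x y z; rewrite !scale1r. Qed.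

Lemma lie_brC x y : br x y = - br y x.
Proof.
case: lie => linl _ alt _; apply/eqP; rewrite -addr_eq0.
have := alt (x + y); have := linl 1 x y (x + y).
by rewrite !scale1r !lie_brDr !alt add0r addr0 => -> ->.
Qed.

Lemma lcs2_central u w : lcs br 2 u -> br u w = 0.
Proof.
move=> [s [_ ->]]; rewrite lie_brC; apply/eqP; rewrite oppr_eq0; apply/eqP.
elim: s => [|p s IH].
  by case: lie => _ linr _ _; have := linr (-1) w w w; rewrite big_nil !scaleN1r !addNr.
by rewrite big_cons lie_brDr nil3 IH addr0.
Qed.

End NilpotentLieAlgebra.

Section EnvelopeFiltration.
Variables (K : fieldType) (g : lmodType K) (br : g -> g -> g) (U : algType K)
  (iota : g -> U).

Lemma filtU0 n : filtU br iota n 0.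
Proof. by exists [::]; split=> //; rewrite big_nil. Qed.

Lemma filtUD n u v :
  filtU br iota n u -> filtU br iota n v -> filtU br iota n (u + v).
Proof.
move=> [s1 [s1P ->]] [s2 [s2P ->]]; exists (s1 ++ s2); split; last by rewrite big_cat.
by move=> w; rewrite mem_cat => /orP [/s1P | /s2P].
Qed.

Lemma filtUZ n a u : filtU br iota n u -> filtU br iota n (a *: u).
Proof.
move=> [s [sP ->]]; exists [seq (a * w.1, w.2) | w <- s]; split.
  by move=> w /mapP [w' /sP w'P ->].
by rewrite big_map scaler_sumr; apply: eq_bigr => w _; rewrite scalerA.
Qed.

Lemma filtU_sum n N (F : 'I_N -> U) :
  (forall i, filtU br iota n (F i)) -> filtU br iota n (\sum_(i < N) F i).
Proof. by move=> FP; apply: big_ind => //; [exact: filtU0 | exact: filtUD]. Qed.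

Lemma filtU_mul_exp n u v i j : lcs br 2 v -> (n <= i + 2 * j)%N ->
  filtU br iota n (iota u ^+ i * iota v ^+ j).
Proof.
move=> v2 high; exists [:: (1, nseq i (1%N, u) ++ nseq j (2%N, v))]; split.
  move=> w; rewrite mem_seq1 => /eqP -> /=; split.
    by move=> p; rewrite mem_cat => /orP [] /nseqP [-> _].
  by rewrite big_cat /= !big_nseq !iter_addn_0 mul1n.
by rewrite big_seq1 scale1r big_cat /= !big_nseq !iter_mulr_1.
Qed.

Lemma filtU_dmon n u v (a : K) i j : lcs br 2 v -> (n <= i + 2 * j)%N ->
  filtU br iota n (dmon (iota u) (a *: iota v) i j).
Proof.
move=> v2 high; rewrite /dmon exprZn -scalerAr.
by do 2 apply: filtUZ; exact: filtU_mul_exp.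
Qed.

End EnvelopeFiltration.

Section RotaBaxterExtensionOnPowers.
Variables (K : fieldType) (g : lmodType K) (br : g -> g -> g) (U : algType K)
  (iota : g -> U) (R : g -> g) (RR : U -> U) (x : g).
Hypotheses (charK0 : [pchar K] =i pred0) (iota_lie : lie_map br iota)
  (RR_linear : linear RR) (RR1 : RR 1 = 1)
  (RR_iota : forall u, RR (iota u) = iota (R u))
  (RR_iotaM : forall u h,
     RR (iota u * h) = iota (R u) * RR h - RR (iota (R u) * h - h * iota (R u))).
Hypotheses (z_central : forall w, br (br (R x) x) w = 0)
  (Rz_central : forall w, br (R (br (R x) x)) w = 0).

HB.instance Definition _ := GRing.isLinear.Build K g U *:%R iota (proj1 iota_lie).
HB.instance Definition _ := GRing.isLinear.Build K U U *:%R RR RR_linear.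

Local Notation a := (iota x).
Local Notation b := (iota (R x)).
Local Notation c := (iota (br (R x) x)).
Local Notation d := (iota (R (br (R x) x))).
Local Notation e := ((- (2%:R : K)^-1) *: d).

Lemma iota_comm u v : br u v = 0 -> GRing.comm (iota u) (iota v).
Proof.
by move=> uv0; apply/eqP; rewrite -subr_eq0 -(proj2 iota_lie) uv0 raddf0.
Qed.

Lemma RR_exprSS m :
  RR (a ^+ m.+2) = b * RR (a ^+ m.+1) - (d * RR (a ^+ m)) *+ m.+1.
Proof.
have ba : b * a - a * b = c by rewrite (proj2 iota_lie).
rewrite exprS RR_iotaM (commutator_exprS ba (iota_comm (z_central _))) raddfMn /=.
by rewrite RR_iotaM (commrX m (iota_comm (Rz_central _))) subrr raddf0 subr0.
Qed.

Lemma comm_b_e : GRing.comm b e.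
Proof. by rewrite /GRing.comm -scalerAr -scalerAl (iota_comm (Rz_central _)). Qed.

Lemma RR_exp_trunc n : RR (exp_trunc n a) = \sum_(k < n) wpart b e 2 n k.
Proof.
have RR_expr : forall k, (k < n)%N -> RR (a ^+ k) = wpart b e 2 n k *+ k`!.
  apply: (wpart2_recursion charK0 comm_b_e) => [||m]; first exact: RR1.
    by rewrite expr1 RR_iota.
  rewrite RR_exprSS; congr (_ + _); rewrite -mulNrn; congr (_ *+ _).
  by rewrite -scalerAl scalerMnl -mulr_natr mulNr mulVf ?natf_neq0_char0 // scaleN1r.
rewrite /exp_trunc raddf_sum /=; apply: eq_bigr => k _.
rewrite linearZ /= RR_expr // -scaler_nat scalerA.
by rewrite mulVf ?scale1r ?natf_neq0_char0 ?fact_gt0.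
Qed.

Lemma exp_trunc_sub_RR_exp_trunc n :
  exp_trunc n (iota (R x - (2%:R : K)^-1 *: R (br (R x) x))) - RR (exp_trunc n a) =
  \sum_(i < n) \sum_(j < n)
    (if (i + j < n)%N && (n <= i + 2 * j)%N then dmon b e i j else 0).
Proof.
rewrite raddfB /= linearZ /= -scaleNr RR_exp_trunc.
exact: exp_trunc_sub_sum_wpart2 charK0 comm_b_e n.
Qed.

End RotaBaxterExtensionOnPowers.

Theorem proposition4p15 (K : fieldType) (g : lmodType K) (br : g -> g -> g)
  (U : algType K) (iota : g -> U) (R : g -> g) (RR : U -> U) :
  [pchar K] =i pred0 ->
  is_lie_bracket br ->
  (forall x y z : g, br x (br y z) = 0) ->
  rota_baxter1 br R ->
  (forall (n : nat) (x : g), lcs br n x -> lcs br n (R x)) ->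
  is_envelope br iota ->
  RB_ext iota R RR ->
  forall x : g,
    let y := R x - (2%:R : K)^-1 *: R (br (R x) x) in
    forall n : nat,
      filtU br iota n (exp_trunc n (iota y) - RR (exp_trunc n (iota x))).
Proof.
move=> charK0 lie nil3 _ R_filt [iota_lie _] [RR_linear RR1 RR_iota RR_iotaM] x y n.
have z2 : lcs br 2 (br (R x) x).
  by exists [:: (R x, x)]; split=> [p _ | ]; rewrite ?big_seq1.
have central u : lcs br 2 u -> forall w, br u w = 0 by move=> u2 w; exact: lcs2_central.
rewrite /y (exp_trunc_sub_RR_exp_trunc charK0 iota_lie RR_linear RR1 RR_iota RR_iotaM
  (central _ z2) (central _ (R_filt _ _ z2))).
apply: filtU_sum => i; apply: filtU_sum => j.
case: ifP => [/andP [_ high] | _]; last exact: filtU0.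
exact: filtU_dmon (R_filt _ _ z2) high.
Qed.
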